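(* Let $\alpha\ge 2$ be a real number, and let $Q_n=\widehat{P}_n/P_n$ (for $n\ge1$) be as defined in the context. Then the sequence $(Q_n)$ converges to some real number $r_1>1$, and it oscillates around this limit: there are arbitrarily large integers $n$ with $Q_n>r_1$, and arbitrarily large integers $n$ with $Q_n<r_1$.
   Context: For a real number $\alpha\ge 1$, define the integer sequence $(P_i)_{i\ge 0}=(P^\alpha_i)$ by $P_0=0$, $P_1=1$, and for $k\ge 1$, $P_{k+1}=P_k+P_j$, where $j\ge 1$ is the unique index with $\alpha P_{j-1}<P_k\le \alpha P_j$. For $i\ge 1$, the window of $P_i$ is $W_\alpha(P_i)=\{P_j : \alpha P_{i-1}<P_j\le \alpha P_i\}$. Let $\widehat{P}_i$ be the smallest term of the sequence $(P_m)$ that is greater than $\max W_\alpha(P_i)$ (equivalently $\widehat P_i=P_{j+1}$ where $P_j=\max W_\alpha(P_i)$), and set $Q_i=\widehat{P}_i/P_i$. *)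

From HB Require Import structures.
From mathcomp Require Import all_boot all_order all_algebra.
From mathcomp Require Import all_classical all_reals all_analysis.
Set Implicit Arguments. Unset Strict Implicit. Unset Printing Implicit Defensive.
Import Order.TTheory GRing.Theory Num.Theory.
Local Open Scope ring_scope.
Local Open Scope classical_set_scope.

Section PSequence.
Variables (R : realType) (alpha : R).

(* Given s = [:: P_0; ...; P_k] (k >= 1), compute P_{k+1} = P_k + P_j where
   j >= 1 is the (unique) index with alpha * P_{j-1} < P_k <= alpha * P_j.
   Such a j necessarily satisfies j <= k, so we search j among 1..k. *)
Definition next_term (s : seq nat) : nat :=
  let k := (size s).-1 in
  let pk := nth 0%N s k in
  let ok (j : nat) := (alpha * (nth 0%N s j.-1)%:R < pk%:R)
                      && (pk%:R <= alpha * (nth 0%N s j)%:R) in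
  let j := nth 0%N (iota 1 k) (find ok (iota 1 k)) in
  (pk + nth 0%N s j)%N.

(* Plist n = [:: P_0; P_1; ...; P_(n+1)] *)
Fixpoint Plist (n : nat) : seq nat :=
  match n with
  | 0 => [:: 0%N; 1%N]
  | n'.+1 => let s := Plist n' in rcons s (next_term s)
  end.

Definition P (n : nat) : nat := nth 0%N (Plist n) n.

Definition in_window (i j : nat) : bool :=
  (alpha * (P i.-1)%:R < (P j)%:R) && ((P j)%:R <= alpha * (P i)%:R).

Definition maxW (i : nat) : nat :=
  xget 0%N [set m | (exists j, in_window i j /\ m = P j)
                    /\ forall j, in_window i j -> (P j <= m)%N].

Definition Phat (i : nat) : nat :=
  xget 0%N [set h | (exists m, h = P m) /\ (maxW i < h)%N
                    /\ forall m, (maxW i < P m)%N -> (h <= P m)%N].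

Definition Q (i : nat) : R := (Phat i)%:R / (P i)%:R.

End PSequence.

From HB Require Import structures.
From mathcomp Require Import all_boot all_order all_algebra.
From mathcomp Require Import all_classical all_reals all_analysis.
From mathcomp Require Import ring lra zify.
Import Order.TTheory GRing.Theory Num.Theory numFieldNormedType.Exports.
Set Implicit Arguments. Unset Strict Implicit.
Local Open Scope classical_set_scope.
Local Open Scope ring_scope.

(** Let [window_of k] be the index [j] with [P_k] in the window of [P_j], so that
   [P_(k+1) = P_k + P_j].  Windows are disjoint consecutive intervals, hence
   [window_of] is nondecreasing with increments at most one, and the lag
   [k - window_of k] is nondecreasing and bounded by [alpha^2]; for [alpha >= 2]
   it is eventually a constant [m >= 1].  From then on
   [P_(n+m+1) = P_(n+m) + P_n], the window of [P_i] is [{P_(i+m)}] and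
   [Q_i = P_(i+m+1) / P_i].

   Let [1 < x < 2] solve [x^(m+1) = x^m + 1].  Then [a_n = P_n / x^n] satisfies
   [a_(n+m+1) = a_(n+m) / x + (1 - 1/x) a_n]: every new term is a convex
   combination of earlier ones, so the range of [m+1] consecutive terms shrinks
   geometrically and [a] converges to a positive limit; hence
   [Q_i = x^(m+1) a_(i+m+1) / a_i] tends to [r1 = x^(m+1)].  If [Q_i <= r1] for
   all large [i], the nonnegative differences [a_i - a_(i+m+1)] obey the same
   recurrence and tend to [0], which forces them to vanish; so [a] is eventually
   constant, i.e. [P_(n+1) = x P_n], which is impossible for integers since the
   iterated differences [(x-1)^k P_n] would be positive integers tending to [0].
   The case [Q_i >= r1] is symmetric. *)

Lemma nondecreasing_bounded_eventually_const (f : nat -> nat) (B : nat) :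
  {homo f : i j / (i <= j)%N} -> (forall n, (f n <= B)%N) ->
  exists N, forall n, (N <= n)%N -> f n = f N.
Proof.
move=> f_homo f_le; pose attained v := `[< exists n, f n = v >].
have ex_v : exists v, attained v by exists (f 0%N); apply/asboolP; exists 0%N.
have ub_v v : attained v -> (v <= B)%N by move=> /asboolP[n <-].
case: (ex_maxnP ex_v ub_v) => _ /asboolP[N <-] f_max.
exists N => n le_Nn; apply/anti_leq/andP; split; last exact: f_homo.
by apply: f_max; apply/asboolP; exists n.
Qed.

Lemma exists_expr_lt (R : realType) (y e : R) :
  0 <= y < 1 -> 0 < e -> exists q, y ^+ q < e.
Proof.
case/andP=> y_ge0 y_lt1 e_gt0; have y_norm : `|y| < 1 by rewrite ger0_norm.
by have [N _ lt_e] := cvgr_lt _ (cvg_expr y_norm) _ e_gt0; exists N; apply: lt_e => /=.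
Qed.

Lemma window_bounded (R : realDomainType) (b : nat -> R) k m :
  exists l h, forall t, (t <= m)%N -> l <= b (k + t)%N <= h.
Proof.
elim: m => [|m [l [h lbh]]].
  by exists (b k), (b k); case=> // _; rewrite addn0 lexx.
exists (Num.min l (b (k + m.+1)%N)), (Num.max h (b (k + m.+1)%N)) => t.
rewrite leq_eqVlt => /orP[/eqP->|/lbh/andP[lb hb]].
  by rewrite ge_min le_max !lexx !orbT.
by rewrite ge_min le_max lb hb.
Qed.

Section Averaging.
Variables (R : realType) (m n0 : nat) (w : R).
Hypotheses (w_gt0 : 0 < w) (w_lt1 : w < 1).

Let one_sub_w_gt0 : 0 < 1 - w. Proof. by rewrite subr_gt0. Qed.

Definition averaging (b : nat -> R) :=
  forall n, (n0 <= n)%N -> b (n + m)%N.+1 = w * b (n + m)%N + (1 - w) * b n.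

Lemma averagingN b : averaging b -> averaging (fun n => - b n).
Proof. by move=> avg_b n le_n; rewrite avg_b //; ring. Qed.

Lemma averaging_ge b k l : averaging b -> (n0 <= k)%N ->
  (forall t, (t <= m)%N -> l <= b (k + t)%N) -> forall j, (k <= j)%N -> l <= b j.
Proof.
move=> avg_b le_k lb_win; suff lb q t : (t <= m)%N -> l <= b (k + q + t)%N.
  by move=> j /subnKC<-; have := lb (j - k)%N 0%N (leq0n m); rewrite addn0.
elim: q t => [|q IHq] t le_tm; first by rewrite addn0 lb_win.
have [lt_tm|ge_tm] := ltnP t m; first by rewrite addnS addSnnS IHq.
have -> : (k + q.+1 + t = (k + q + m).+1)%N by lia.
rewrite avg_b; last by rewrite (leq_trans le_k) ?leq_addr.
have := IHq m (leqnn m); have := IHq 0%N (leq0n m); rewrite addn0 => lb0 lbm.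
have := ler_wpM2l (ltW w_gt0) lbm; have := ler_wpM2l (ltW one_sub_w_gt0) lb0; lra.
Qed.

Lemma averaging_le b k h : averaging b -> (n0 <= k)%N ->
  (forall t, (t <= m)%N -> b (k + t)%N <= h) -> forall j, (k <= j)%N -> b j <= h.
Proof.
move=> /averagingN avg_nb le_k ub_win j le_j; rewrite -lerN2.
by apply: (averaging_ge avg_nb le_k) => // t /ub_win; rewrite lerN2.
Qed.

Lemma averaging_gap b k l s t : averaging b -> (n0 <= k)%N ->
  (forall j, (k <= j)%N -> l <= b j) -> (k + m <= s)%N ->
  w ^+ t * (b s - l) <= b (s + t)%N - l.
Proof.
move=> avg_b le_k lb le_s; elim: t => [|t IHt]; first by rewrite expr0 mul1r addn0.
have -> : (s + t.+1 = (s + t - m + m).+1)%N by lia.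
rewrite avg_b; last by lia.
rewrite subnK; last by lia.
have := ler_wpM2l (ltW w_gt0) IHt.
have : 0 <= (1 - w) * (b (s + t - m)%N - l) by rewrite mulr_ge0 ?subr_ge0 ?lb ?ltW //; lia.
by rewrite exprS -mulrA; lra.
Qed.

Lemma averaging_contract b k l h : averaging b -> (n0 <= k)%N ->
  (forall t, (t <= m)%N -> l <= b (k + t)%N <= h) ->
  exists l' h', h' - l' = (1 - w ^+ m.+1) * (h - l) /\
    forall t, (t <= m)%N -> l' <= b (k + m.+1 + t)%N <= h'.
Proof.
move=> avg_b le_k win.
have lb j : (k <= j)%N -> l <= b j by apply: averaging_ge => // t /win/andP[].
have ub j : (k <= j)%N -> - h <= - b j.
  by rewrite lerN2; apply: averaging_le => // t /win/andP[].
have /andP[lb_B ub_B] := win m (leqnn m).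
exists (l + w ^+ m.+1 * (b (k + m)%N - l)), (h - w ^+ m.+1 * (h - b (k + m)%N)).
split=> [|t le_t]; first by ring.
have le_w : w ^+ m.+1 <= w ^+ t.+1 by rewrite ler_wiXn2l ?ltW.
rewrite (_ : k + m.+1 + t = (k + m + t).+1)%N; last by lia.
have := averaging_gap t.+1 avg_b le_k lb (leqnn _).
have := averaging_gap t.+1 (averagingN avg_b) le_k ub (leqnn _).
rewrite -subr_ge0 in lb_B; rewrite -subr_ge0 in ub_B.
have := ler_wpM2r lb_B le_w; have := ler_wpM2r ub_B le_w.
by rewrite !addnS => *; apply/andP; split; lra.
Qed.

Lemma averaging_cvg b : averaging b -> cvgn b.
Proof.
move=> avg_b.
have d_ge0 : 0 <= 1 - w ^+ m.+1 by rewrite subr_ge0 exprn_ile1 // ltW.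
have d_lt1 : 1 - w ^+ m.+1 < 1 by rewrite ltrBlDr ltrDl exprn_gt0.
have [l0 [h0 win0]] := window_bounded b n0 m.
have nested q : exists l h, h - l = (1 - w ^+ m.+1) ^+ q * (h0 - l0) /\
    forall t, (t <= m)%N -> l <= b (n0 + q * m.+1 + t)%N <= h.
  elim: q => [|q [l [h [width win]]]].
    by exists l0, h0; rewrite expr0 mul1r mul0n addn0.
  have [l' [h' [width' win']]] := averaging_contract avg_b (leq_addr _ _) win.
  exists l', h'; split; first by rewrite width' width mulrA -exprS.
  by move=> t /win'; rewrite mulSnr addnA.
have /andP[l0_b h0_b] := win0 0%N (leq0n m); rewrite -subr_ge0 in h0_b.
have lh_gt0 : 0 < h0 - l0 + 1 by lra.
apply/cauchy_cvgP/cauchy_exP => e e_gt0.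
have [q d_small] : exists q, (1 - w ^+ m.+1) ^+ q < e / (h0 - l0 + 1).
  by apply: exists_expr_lt; rewrite ?d_ge0 ?d_lt1 ?divr_gt0.
have [l [h [width win]]] := nested q.
exists l, (n0 + q * m.+1)%N => // n /= le_n.
have lb : l <= b n by apply: averaging_ge avg_b (leq_addr _ _) _ _ le_n => t /win/andP[].
have ub : b n <= h by apply: averaging_le avg_b (leq_addr _ _) _ _ le_n => t /win/andP[].
have Dq_ge0 := exprn_ge0 q d_ge0; rewrite ltr_pdivlMr // in d_small.
by rewrite -ball_normE /= distrC ger0_norm ?subr_ge0 //; lra.
Qed.

(* A positive value [b j] keeps the whole next window above [w^m b j], and hence all later terms. *)
Lemma averaging_eventually_zero b N : averaging b ->
  (forall n, (N <= n)%N -> 0 <= b n) -> b @ \oo --> 0 ->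
  exists K, forall n, (K <= n)%N -> b n = 0.
Proof.
move=> avg_b b_ge0 b_cvg0; set k := maxn N n0.
have lb j : (k <= j)%N -> 0 <= b j.
  by move=> le_j; apply/b_ge0/(leq_trans (leq_maxl N n0) le_j).
exists (k + m)%N => j le_j; apply/eqP; apply: contraT => b_neq0.
have b_gt0 : 0 < b j by rewrite lt0r b_neq0 lb // (leq_trans (leq_addr m k)).
have beta_gt0 : 0 < w ^+ m * b j by rewrite mulr_gt0 ?exprn_gt0.
have win t : (t <= m)%N -> w ^+ m * b j <= b (j + t)%N.
  move=> le_t; have := averaging_gap t avg_b (leq_maxr N n0) lb le_j.
  by rewrite !subr0; apply: le_trans; rewrite ler_pM2r // ler_wiXn2l ?ltW.
have le_n0j : (n0 <= j)%N by rewrite (leq_trans (leq_maxr N n0)) // (leq_trans (leq_addr m k)).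
have beta_le := averaging_ge avg_b le_n0j win.
have [K _ lt_beta] := cvgr_lt _ b_cvg0 _ beta_gt0.
have := lt_beta (maxn K j) (leq_maxl _ _); have := beta_le (maxn K j) (leq_maxr _ _).
by move=> /le_lt_trans/[apply]; rewrite ltxx.
Qed.

Lemma averaging_eventually_const b N : averaging b -> cvgn b ->
  (forall n, (N <= n)%N -> b (n + m.+1)%N <= b n) ->
  exists K, forall n, (K <= n)%N -> b n = limn b.
Proof.
move=> avg_b b_cvg b_dec; pose d n := b n - b (n + m.+1)%N.
have avg_d : averaging d.
  move=> n le_n; rewrite /d avg_b // (_ : (n + m).+1 + m.+1 = (n + m.+1 + m).+1)%N; last by lia.
  rewrite avg_b ?(leq_trans le_n) ?leq_addr //.
  by rewrite (_ : n + m.+1 + m = n + m + m.+1)%N; [ring|lia].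
have d_cvg0 : d @ \oo --> 0.
  rewrite -(subrr (limn b)); apply: cvgB => //.
  exact: cvg_comp _ _ (cvg_addnr m.+1) b_cvg.
have d_ge0 n : (N <= n)%N -> 0 <= d n by move=> /b_dec; rewrite subr_ge0.
have [K d_eq0] := averaging_eventually_zero avg_d d_ge0 d_cvg0.
exists K => n le_n; have periodic t : b (n + t * m.+1)%N = b n.
  elim: t => [|t IHt]; first by rewrite mul0n addn0.
  have /eqP := d_eq0 (n + t * m.+1)%N (leq_trans le_n (leq_addr _ _)).
  by rewrite subr_eq0 mulSnr addnA => /eqP <-.
have sub_cvg : (fun t => b (n + t * m.+1)%N) @ \oo --> limn b.
  have idx_cvg := cvg_comp _ _ (cvg_mulnr m.+1 (ltn0Sn m)) (cvg_addnl n).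
  exact: cvg_comp _ _ idx_cvg b_cvg.
rewrite (funext periodic) in sub_cvg.
by rewrite -(cvg_lim (@Rhausdorff R) sub_cvg) lim_cst.
Qed.

Lemma averaging_eventually_constN b N : averaging b -> cvgn b ->
  (forall n, (N <= n)%N -> b n <= b (n + m.+1)%N) ->
  exists K, forall n, (K <= n)%N -> b n = limn b.
Proof.
move=> /averagingN avg_nb b_cvg b_inc.
have nb_cvg : (fun n => - b n) @ \oo --> - limn b by apply: cvgN.
have nb_dec n : (N <= n)%N -> - b (n + m.+1)%N <= - b n by move/b_inc; rewrite lerN2.
have [K nb_const] := averaging_eventually_const avg_nb (cvgP _ nb_cvg) nb_dec.
by exists K => n /nb_const; rewrite (cvg_lim (@Rhausdorff R) nb_cvg) => /oppr_inj.
Qed.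

End Averaging.

Lemma exists_root_expS_sub_exp (R : rcfType) (m : nat) : (1 <= m)%N ->
  exists x : R, [/\ 1 < x, x < 2 & x ^+ m.+1 = x ^+ m + 1].
Proof.
move=> m_ge1; pose q : {poly R} := 'X^(m.+1) - 'X^m - 1.
have q1 : q.[1] = -1 by rewrite !hornerE !expr1n; ring.
have two_le : 2 <= 2 ^+ m :> R by rewrite -[leLHS]expr1 ler_weXn2l // ler1n.
have q2 : q.[2] = 2 ^+ m - 1 by rewrite !hornerE exprS; ring.
have [x /andP[x_ge1 x_le2] /rootP] : exists2 x : R, 1 <= x <= 2 & root q x.
  by apply: poly_ivt; rewrite ?ler1n // q1 q2; apply/andP; split; lra.
move=> /eqP; rewrite !hornerE subr_eq0 => /eqP q_x; exists x; split; last by lra.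
- by rewrite lt_neqAle x_ge1 andbT; apply/eqP => x1; rewrite -x1 !expr1n in q_x; lra.
- by rewrite lt_neqAle x_le2 andbT; apply/eqP => x2; rewrite x2 exprS in q_x; lra.
Qed.

Lemma nat_geometric_eq0 (R : realType) (x : R) (f : nat -> nat) : 1 < x < 2 ->
  (forall n, (f n.+1)%:R = x * (f n)%:R) -> f 0%N = 0%N.
Proof.
case/andP=> x_gt1 x_lt2 f_geo.
have diff_nat i : exists g : nat -> nat, forall n, (g n)%:R = (x - 1) ^+ i * (f n)%:R.
  elim: i => [|i [g g_eq]]; first by exists f => n; rewrite expr0 mul1r.
  have le_g n : (g n <= g n.+1)%N.
    rewrite -(ler_nat R) !g_eq f_geo mulrCA.
    by apply: ler_peMl; [rewrite -g_eq ler0n|exact: ltW].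
  by exists (fun n => g n.+1 - g n)%N => n; rewrite natrB // !g_eq f_geo exprSr; ring.
apply/eqP; apply: contraT; rewrite -lt0n -(ltr0n R) => f0_gt0.
have [q small] : exists q, (x - 1) ^+ q < 1 / (f 0%N)%:R.
  by apply: exists_expr_lt; rewrite ?divr_gt0 // subr_ge0 ltW //= ltrBlDr.
have [g g_eq] := diff_nat q; rewrite ltr_pdivlMr // -g_eq in small.
rewrite ltrn1 in small; have := g_eq 0%N; case: (g 0%N) small => // _ /esym/eqP.
by rewrite mulr0n gt_eqF // mulr_gt0 ?exprn_gt0 ?subr_gt0.
Qed.

Section PSequence.
Variables (R : realType) (alpha : R).
Hypothesis alpha_ge1 : 1 <= alpha.
Local Notation p := (P alpha).

Let alpha_ge0 : 0 <= alpha. Proof. exact: le_trans alpha_ge1. Qed.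

Lemma size_Plist n : size (Plist alpha n) = n.+2.
Proof. by elim: n => //= n IHn; rewrite size_rcons IHn. Qed.

Lemma nth_Plist_rcons n i : (i < n.+2)%N ->
  nth 0%N (Plist alpha n.+1) i = nth 0%N (Plist alpha n) i.
Proof. by move=> lt_i /=; rewrite nth_rcons size_Plist lt_i. Qed.

Lemma nth_Plist n i : (i <= n.+1)%N -> nth 0%N (Plist alpha n) i = p i.
Proof.
elim: n i => [|n IHn] i le_i.
  by case: i le_i => [|[|i]].
move: le_i; rewrite leq_eqVlt => /orP[/eqP->|lt_i].
  by rewrite /P [RHS]nth_Plist_rcons.
by rewrite nth_Plist_rcons ?IHn.
Qed.

Definition window_of (k : nat) : nat :=
  nth 0%N (iota 1 k) (find (in_window alpha ^~ k) (iota 1 k)).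

Lemma window_of_le k : (window_of k <= k)%N.
Proof.
rewrite /window_of; case: (ltnP (find (in_window alpha ^~ k) (iota 1 k)) k) => lt_k.
  by rewrite nth_iota // add1n.
by rewrite nth_default // size_iota.
Qed.

Lemma P_succ k : (1 <= k)%N -> p k.+1 = (p k + p (window_of k))%N.
Proof.
case: k => // n _.
have -> : p n.+2 = next_term alpha (Plist alpha n).
  by rewrite /P nth_Plist_rcons //= nth_rcons size_Plist ltnn eqxx.
rewrite /next_term (_ : (size _).-1 = n.+1) ?size_Plist // nth_Plist //.
rewrite (@eq_in_find _ _ (in_window alpha ^~ n.+1)); last first.
  by move=> j; rewrite mem_iota => /andP[? ?]; rewrite /in_window !nth_Plist //; lia.
by rewrite nth_Plist //; have := window_of_le n.+1.
Qed.

Lemma P_gt0 k : (1 <= k)%N -> (0 < p k)%N.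
Proof.
elim: k => // -[//|k] IHk _.
by rewrite P_succ // ltn_addr // IHk.
Qed.

Lemma window_of_spec k : (1 <= k)%N ->
  [/\ (1 <= window_of k)%N, (window_of k <= k)%N & in_window alpha (window_of k) k].
Proof.
move=> k_ge1; have le_alpha (y : R) : 0 <= y -> y <= alpha * y.
  by move=> y_ge0; rewrite -{1}(mul1r y) ler_wpM2r.
have ex_j : exists j, (0 < j)%N && ((p k)%:R <= alpha * (p j)%:R).
  by exists k; rewrite k_ge1 le_alpha.
case: (ex_minnP ex_j) => j /andP[j_gt0 le_pk] j_min.
have win_j : in_window alpha j k.
  rewrite /in_window le_pk andbT; case: j j_gt0 le_pk j_min => // -[|j] _ _ j_min.
    by rewrite /P /= mulr0 ltr0n P_gt0.
  by rewrite ltNge; apply/negP => le_pk; have := j_min j.+1; rewrite le_pk /=; lia.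
have has_win : has (in_window alpha ^~ k) (iota 1 k).
  apply/hasP; exists j => //; rewrite mem_iota add1n j_gt0 ltnS j_min //.
  by rewrite k_ge1 le_alpha.
split; [|exact: window_of_le|exact: (nth_find 0%N has_win)].
by rewrite /window_of nth_iota // -[X in (_ < X)%N](size_iota 1) -has_find.
Qed.

Lemma P_succR k : (1 <= k)%N -> (p k.+1)%:R = (p k)%:R + (p (window_of k))%:R :> R.
Proof. by move=> k_ge1; rewrite P_succ // natrD. Qed.

Lemma P_lt_succ k : (p k < p k.+1)%N.
Proof.
case: k => [//|k]; have [j_ge1 _ _] := window_of_spec (ltn0Sn k).
by rewrite [p k.+2]P_succ //; have := P_gt0 j_ge1; lia.
Qed.

Lemma P_leq_mono : {mono p : i j / (i <= j)%N}.
Proof. exact/leq_mono/(homo_ltn ltn_trans P_lt_succ). Qed.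

Lemma P_ltn_mono : {mono p : i j / (i < j)%N}.
Proof. exact: leqW_mono P_leq_mono. Qed.

Lemma ler_alphaP i j : (i <= j)%N -> alpha * (p i)%:R <= alpha * (p j)%:R.
Proof. by move=> le_ij; rewrite ler_wpM2l ?alpha_ge0 // ler_nat P_leq_mono. Qed.

Lemma in_window_inj k i j : in_window alpha i k -> in_window alpha j k -> i = j.
Proof.
wlog lt_ij : i j / (i < j)%N.
  move=> wlog_ij win_i win_j; case: (ltngtP i j) => // lt.
  - exact: wlog_ij.
  - exact/esym/wlog_ij.
move=> /andP[_ le_i] /andP[lt_j _].
have le_ij : alpha * (p i)%:R <= alpha * (p j.-1)%:R by apply: ler_alphaP; lia.
by have := le_lt_trans (le_trans le_i le_ij) lt_j; rewrite ltxx.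
Qed.

Lemma window_ofE k j : (1 <= k)%N -> in_window alpha j k -> window_of k = j.
Proof. by move=> /window_of_spec[_ _ win_k] /(in_window_inj win_k). Qed.

Lemma window_of_step k : (window_of k <= window_of k.+1 <= (window_of k).+1)%N.
Proof.
case: k => [|k].
  by have [] := window_of_spec (leqnn 1); change (window_of 0) with 0%N; lia.
have [j_ge1 _ /andP[lt_j le_j]] := window_of_spec (ltn0Sn k).
have [_ _ /andP[lt_j' le_j']] := window_of_spec (ltn0Sn k.+1).
have lt_k : (p k.+1)%:R < (p k.+2)%:R :> R by rewrite ltr_nat P_lt_succ.
rewrite (P_succR (ltn0Sn k)) in lt_j' le_j' lt_k.
set j := window_of k.+1 in j_ge1 lt_j le_j lt_j' le_j' lt_k *.
set j' := window_of k.+2 in lt_j' le_j' *.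
apply/andP; split; rewrite leqNgt; apply/negP => lt_jj.
  by have := @ler_alphaP j' j.-1 ltac:(lia); lra.
have [_ _ /andP[_ le_jj]] := window_of_spec j_ge1.
have := @ler_alphaP j.+1 j'.-1 ltac:(lia).
rewrite P_succR //; lra.
Qed.

Lemma window_of_homo : {homo window_of : i j / (i <= j)%N}.
Proof. by apply: homo_leq leqnn leq_trans _ => k; case/andP: (window_of_step k). Qed.

Lemma lag_homo : {homo (fun k => k - window_of k)%N : i j / (i <= j)%N}.
Proof.
apply: homo_leq leqnn leq_trans _ => k.
by have := window_of_step k; have := window_of_le k; lia.
Qed.

Lemma P_add_window i t : (1 <= i)%N -> (p i + t * p (window_of i) <= p (i + t))%N.
Proof.
move=> i_ge1; elim: t => [|t IHt]; first by rewrite mul0n !addn0.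
rewrite addnS P_succ; last exact: leq_trans i_ge1 (leq_addr _ _).
by rewrite mulSnr addnA leq_add // P_leq_mono window_of_homo // leq_addr.
Qed.

(* With [i = window_of k], each of the [k - i] steps after [P_i] adds at least
   [P_(window_of i) >= P_i / alpha], while [P_k <= alpha P_i]. *)
Lemma lag_le k : (1 <= k)%N -> (k - window_of k)%:R <= alpha ^+ 2.
Proof.
move=> k_ge1; have [i_ge1 le_ik /andP[_ le_k]] := window_of_spec k_ge1.
have [_ _ /andP[_ le_i]] := window_of_spec i_ge1.
have := P_add_window (k - window_of k) i_ge1; rewrite subnKC // => le_add.
set i := window_of k in i_ge1 le_k le_i le_add *; set L := (k - i)%N in le_add *.
have le_Lk : L%:R * (p (window_of i))%:R <= (p k)%:R :> R.
  by rewrite -natrM ler_nat; lia.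
have p_i_gt0 : 0 < (p i)%:R :> R by rewrite ltr0n P_gt0.
have le1 : L%:R * (p i)%:R <= L%:R * (alpha * (p (window_of i))%:R).
  by rewrite ler_wpM2l.
have le2 : alpha * (L%:R * (p (window_of i))%:R) <= alpha * (p k)%:R.
  by rewrite ler_wpM2l ?alpha_ge0.
have le3 : alpha * (p k)%:R <= alpha ^+ 2 * (p i)%:R.
  by rewrite expr2 -mulrA ler_wpM2l ?alpha_ge0.
rewrite -(ler_pM2r p_i_gt0); rewrite mulrCA in le2; lra.
Qed.

Section AlphaGe2.
Hypothesis alpha_ge2 : 2 <= alpha.

Lemma window_of_lt k : (2 <= k)%N -> (window_of k < k)%N.
Proof.
case: k => [|[|k]] // _; have [_ le_jk /andP[lt_j _]] := window_of_spec (ltn0Sn k.+1).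
rewrite ltn_neqAle le_jk andbT; apply/negP => /eqP eq_jk; move: lt_j; rewrite eq_jk /=.
have le_pk : (p (window_of k.+1))%:R <= (p k.+1)%:R :> R.
  by rewrite ler_nat P_leq_mono window_of_le.
have : 2 * (p k.+1)%:R <= alpha * (p k.+1)%:R :> R by rewrite ler_wpM2r.
by rewrite (@P_succR k.+1) //; lra.
Qed.

Lemma eventually_constant_lag :
  exists m K, (1 <= m)%N /\ forall k, (K <= k)%N -> (window_of k + m)%N = k.
Proof.
have lag_bounded k : (k - window_of k <= Num.bound (alpha ^+ 2))%N.
  case: k => [//|k]; rewrite -(ler_nat R); apply/ltW/(le_lt_trans (lag_le (ltn0Sn k))).
  by apply: archi_boundP; rewrite exprn_ge0 ?alpha_ge0.
have [N lag_const] := nondecreasing_bounded_eventually_const lag_homo lag_bounded.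
exists (N.+2 - window_of N.+2)%N, N.+2; split.
  by have := window_of_lt (isT : 1 < N.+2)%N; lia.
move=> k le_k; have := lag_const k ltac:(lia); have := lag_const N.+2 ltac:(lia).
by have := window_of_le k; lia.
Qed.

End AlphaGe2.

Section EventuallyConstantLag.
Variables (m K : nat).
Hypothesis lag_eq : forall k, (K <= k)%N -> (window_of k + m)%N = k.

Lemma P_succ_lag n : (K < n + m)%N -> (p (n + m).+1 = p (n + m) + p n)%N.
Proof.
move=> lt_K; have := lag_eq (ltnW lt_K); rewrite P_succ; last by case: (n + m)%N lt_K.
by move/eqP; rewrite eqn_add2r => /eqP->.
Qed.

Lemma in_window_lag i j : (K < i + m)%N -> in_window alpha i j = (j == i + m)%N.
Proof.
move=> lt_K; apply/idP/eqP => [win_ij|->]; last first.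
  have [_ _] := window_of_spec (leq_ltn_trans (leq0n K) lt_K); have := lag_eq (ltnW lt_K).
  by move/eqP; rewrite eqn_add2r => /eqP->.
have j_ge1 : (1 <= j)%N.
  by case: j win_ij => // /andP[+ _]; rewrite ltNge mulr_ge0 ?alpha_ge0.
have := window_ofE j_ge1 win_ij; case: (leqP K j) => [le_Kj|lt_jK].
  by have := lag_eq le_Kj; lia.
by have := window_of_homo (ltnW lt_jK); have := lag_eq (leqnn K); lia.
Qed.

Lemma maxW_lag i : (K < i + m)%N -> maxW alpha i = p (i + m)%N.
Proof.
move=> lt_K; apply: xget_unique => [|v [[j [win_j ->]] _]]; last first.
  by move: win_j; rewrite in_window_lag // => /eqP->.
by split=> [|j]; [exists (i + m)%N; rewrite in_window_lag|rewrite in_window_lag // => /eqP->].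
Qed.

Lemma Phat_lag i : (K < i + m)%N -> (Phat alpha i = p (i + m).+1)%N.
Proof.
move=> lt_K; rewrite /Phat maxW_lag //; apply: xget_unique.
  split; [by exists (i + m).+1|split; first exact: P_lt_succ].
  by move=> j; rewrite P_ltn_mono P_leq_mono.
move=> _ [[j ->] [lt_j min_j]]; apply/anti_leq/andP; split; first exact/min_j/P_lt_succ.
by rewrite P_leq_mono; rewrite P_ltn_mono in lt_j.
Qed.

End EventuallyConstantLag.
End PSequence.

Section FixedLag.
Variables (R : realType) (alpha : R) (m K : nat) (x : R).
Hypotheses (alpha_ge1 : 1 <= alpha)
  (lag_eq : forall k, (K <= k)%N -> (window_of alpha k + m)%N = k).
Hypotheses (x_gt1 : 1 < x) (x_lt2 : x < 2) (x_root : x ^+ m.+1 = x ^+ m + 1).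
Local Notation p := (P alpha).

Let x_gt0 : 0 < x. Proof. exact: lt_trans x_gt1. Qed.
Let xX_neq0 k : x ^+ k != 0. Proof. by rewrite expf_neq0 // gt_eqF. Qed.
Let pR_gt0 k : (1 <= k)%N -> 0 < (p k)%:R :> R. Proof. by move=> k_ge1; rewrite ltr0n P_gt0. Qed.

Let a k := (p k)%:R / x ^+ k.

Let a_averaging : averaging m K.+1 x^-1 a.
Proof.
move=> n le_n; rewrite /a (P_succ_lag alpha_ge1 lag_eq) ?natrD; last first.
  by rewrite (leq_trans le_n) ?leq_addr.
have : (1 - x^-1) * x ^+ m.+1 = 1.
  by rewrite mulrBl mul1r exprS mulKf ?gt_eqF // -exprS x_root; ring.
move=> /(canRL (mulfK (xX_neq0 m.+1))) ->.
by rewrite !exprSr exprD; field; rewrite !xX_neq0 gt_eqF.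
Qed.

Let w_gt0 : 0 < x^-1. Proof. by rewrite invr_gt0. Qed.
Let w_lt1 : x^-1 < 1. Proof. by rewrite invf_lt1. Qed.

Let a_cvg : cvgn a. Proof. exact: averaging_cvg a_averaging. Qed.

Let limn_a_gt0 : 0 < limn a.
Proof.
have l_gt0 : 0 < (p K.+1)%:R / x ^+ (K.+1 + m)%N by rewrite divr_gt0 ?pR_gt0 ?exprn_gt0.
apply: lt_le_trans l_gt0 _; apply: limr_ge a_cvg _; exists K.+1 => // j /= le_j.
apply: (averaging_ge w_gt0 w_lt1 a_averaging (leqnn _) _ le_j) => t le_t.
apply: ler_pM.
- exact: ler0n.
- by rewrite invr_ge0 exprn_ge0 // ltW.
- by rewrite ler_nat (P_leq_mono alpha_ge1) leq_addr.
- by rewrite lef_pV2 ?posrE ?exprn_gt0 // ler_weXn2l ?(ltW x_gt1) // leq_add2l.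
Qed.

Let Q_eq i : (K < i)%N -> Q alpha i = x ^+ m.+1 * (a (i + m.+1)%N / a i).
Proof.
move=> lt_Ki; rewrite /Q (Phat_lag alpha_ge1 lag_eq); last first.
  by rewrite (leq_trans lt_Ki) ?leq_addr.
rewrite /a -addnS exprD; field.
by rewrite !xX_neq0 gt_eqF ?pR_gt0 // (leq_trans _ lt_Ki).
Qed.

Lemma Q_cvg : Q alpha @ \oo --> x ^+ m.+1.
Proof.
have a_shift_cvg : (fun i => a (i + m.+1)%N) @ \oo --> limn a.
  exact: cvg_comp _ _ (cvg_addnr m.+1) a_cvg.
have : (fun i => x ^+ m.+1 * (a (i + m.+1)%N / a i)) @ \oo -->
       x ^+ m.+1 * (limn a / limn a).
  by apply: cvgMr; apply: cvgM; [|apply: cvgV; rewrite ?gt_eqF].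
rewrite divff ?gt_eqF // mulr1; apply: cvg_trans; apply: near_eq_cvg.
by exists K.+1 => // i /= lt_Ki; rewrite Q_eq.
Qed.

Let a_gt0 k : (1 <= k)%N -> 0 < a k.
Proof. by move=> k_ge1; rewrite divr_gt0 ?pR_gt0 ?exprn_gt0. Qed.

Let Q_le_iff n : (K < n)%N -> (Q alpha n <= x ^+ m.+1) = (a (n + m.+1)%N <= a n).
Proof.
move=> lt_Kn; have a_n_gt0 := a_gt0 (leq_ltn_trans (leq0n K) lt_Kn).
by rewrite Q_eq // ger_pMr ?exprn_gt0 // ler_pdivrMr // mul1r.
Qed.

Let Q_ge_iff n : (K < n)%N -> (x ^+ m.+1 <= Q alpha n) = (a n <= a (n + m.+1)%N).
Proof.
move=> lt_Kn; have a_n_gt0 := a_gt0 (leq_ltn_trans (leq0n K) lt_Kn).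
by rewrite Q_eq // ler_pMr ?exprn_gt0 // ler_pdivlMr // mul1r.
Qed.

Let a_not_eventually_const N : ~ (forall n, (N <= n)%N -> a n = limn a).
Proof.
move=> a_const.
have geo n : (p (N.+1 + n.+1))%:R = x * (p (N.+1 + n))%:R.
  rewrite addnS; have : a (N.+1 + n).+1 = a (N.+1 + n) by rewrite !a_const //; lia.
  move/(congr1 ( *%R^~ (x ^+ (N.+1 + n).+1))).
  by rewrite /a divfK // exprS mulrCA divfK.
have x_bounds : 1 < x < 2 by rewrite x_gt1 x_lt2.
have /eqP := nat_geometric_eq0 (f := fun n => p (N.+1 + n)) x_bounds geo.
by rewrite addn0 eqn0Ngt (P_gt0 alpha_ge1).
Qed.

Lemma Q_gt_often N : exists n, (N < n)%N /\ x ^+ m.+1 < Q alpha n.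
Proof.
apply: contrapT => no_n.
have a_dec n : (maxn N K < n)%N -> a (n + m.+1)%N <= a n.
  move=> lt_n; rewrite -Q_le_iff ?(leq_ltn_trans (leq_maxr N K)) // leNgt.
  by apply/negP => lt_Q; apply: no_n; exists n; rewrite lt_Q (leq_ltn_trans (leq_maxl N K)).
have [K' a_const] := averaging_eventually_const w_gt0 w_lt1 a_averaging a_cvg a_dec.
exact: a_not_eventually_const a_const.
Qed.

Lemma Q_lt_often N : exists n, (N < n)%N /\ Q alpha n < x ^+ m.+1.
Proof.
apply: contrapT => no_n.
have a_inc n : (maxn N K < n)%N -> a n <= a (n + m.+1)%N.
  move=> lt_n; rewrite -Q_ge_iff ?(leq_ltn_trans (leq_maxr N K)) // leNgt.
  by apply/negP => lt_Q; apply: no_n; exists n; rewrite lt_Q (leq_ltn_trans (leq_maxl N K)).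
have [K' a_const] := averaging_eventually_constN w_gt0 w_lt1 a_averaging a_cvg a_inc.
exact: a_not_eventually_const a_const.
Qed.

End FixedLag.

Unset Implicit Arguments.

Theorem mainTheorem2 (R : realType) (alpha : R) :
  2 <= alpha ->
  exists r1 : R, 1 < r1 /\
    Q alpha @ \oo --> r1 /\
    (forall N : nat, exists n : nat, (N < n)%N /\ r1 < Q alpha n) /\
    (forall N : nat, exists n : nat, (N < n)%N /\ Q alpha n < r1).
Proof.
move=> alpha_ge2; have alpha_ge1 : 1 <= alpha by apply: le_trans alpha_ge2; rewrite ler1n.
have [m [K [m_ge1 lag_eq]]] := eventually_constant_lag alpha_ge1 alpha_ge2.
have [x [x_gt1 x_lt2 x_root]] := exists_root_expS_sub_exp R m_ge1.
exists (x ^+ m.+1); split; first by rewrite exprn_egt1.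
split; first exact: Q_cvg alpha_ge1 lag_eq x_gt1 x_root.
split=> N; [exact: Q_gt_often alpha_ge1 lag_eq x_gt1 x_lt2 x_root N
           |exact: Q_lt_often alpha_ge1 lag_eq x_gt1 x_lt2 x_root N].
Qed.
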